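(* $PF<_c FLO$, i.e. $PF\le_c FLO$ and $FLO\not\le_c PF$.
   Context: Conventions: every structure is for a finite relational language and has universe a subset of $\omega$; a class of structures is a collection of structures for one fixed finite relational language closed under isomorphism. $D(\mathcal{A})$ is the atomic diagram of $\mathcal{A}$. A computable transformation from $K$ to $K'$ is a c.e. set $\Phi$ of pairs $(\alpha,\varphi)$, $\alpha$ a finite subset of the atomic diagram of a finite structure in the language of $K$, $\varphi$ an atomic sentence or negation of one in the language of $K'$, such that for every $\mathcal{A}\in K$, $\{\varphi:(\exists\alpha\subseteq D(\mathcal{A}))(\alpha,\varphi)\in\Phi\}=D(\mathcal{B})$ for some $\mathcal{B}\in K'$, written $\Phi(\mathcal{A})=\mathcal{B}$. A computable embedding is a computable transformation with $\mathcal{A}\cong\mathcal{A}'\iff\Phi(\mathcal{A})\cong\Phi(\mathcal{A}')$ for all $\mathcal{A},\mathcal{A}'\in K$. $K\le_c K'$ means a computable embedding of $K$ into $K'$ exists; $K<_c K'$ means $K\le_c K'$ and $K'\not\le_c K$. $PF$ is the class of all finite fields of prime order (with addition, multiplication, $0$, $1$ represented by relations: graphs of the operations and unary predicates). $FLO$ is the class of all finite linear orders (language $\{<\}$). *)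

From HB Require Import structures.
From mathcomp Require Import all_boot all_order all_algebra.
Set Implicit Arguments. Unset Strict Implicit. Unset Printing Implicit Defensive.
Import GRing.Theory.

(* A model of computation: partial recursive functions nat -> nat      *)
(* (the standard basis zero/succ/left/right/pair/comp/prec/rfind', as  *)
(* e.g. in Mathlib's Nat.Partrec.Code), with big-step semantics.       *)

Definition cpair (a b : nat) : nat := ((a + b) * (a + b).+1)./2 + b.

Inductive code : Type :=
| CZero | CSucc | CLeft | CRight
| CPair of code & code
| CComp of code & code
| CPrec of code & code
| CFind of code.

Inductive ev : code -> nat -> nat -> Prop :=
| evZero n : ev CZero n 0
| evSucc n : ev CSucc n n.+1
| evLeft a b : ev CLeft (cpair a b) a
| evRight a b : ev CRight (cpair a b) b
| evPair f g n a b : ev f n a -> ev g n b -> ev (CPair f g) n (cpair a b)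
| evComp f g n m r : ev g n m -> ev f m r -> ev (CComp f g) n r
| evPrec0 f g a r : ev f a r -> ev (CPrec f g) (cpair a 0) r
| evPrecS f g a k ih r :
    ev (CPrec f g) (cpair a k) ih -> ev g (cpair a (cpair k ih)) r ->
    ev (CPrec f g) (cpair a k.+1) r
| evFind0 f a m : ev f (cpair a m) 0 -> ev (CFind f) (cpair a m) m
| evFindS f a m v r : ev f (cpair a m) v.+1 -> ev (CFind f) (cpair a m.+1) r ->
    ev (CFind f) (cpair a m) r.

Definition ce (T : countType) (P : T -> Prop) : Prop :=
  exists c : code, forall x : T, P x <-> exists r, ev c (pickle x) r.

(* A finite relational language: the list of arities of its symbols
   R_0, ..., R_{k-1}. *)
Definition language := seq nat.

(* A structure: universe (a subset of omega) and interpretation of the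
   relation symbols (only values on tuples of the right arity from the
   universe matter). *)
Record structure (L : language) := Structure {
  sdom : pred nat;
  srel : nat -> seq nat -> bool }.

(* Atomic sentences (with constants naming the elements of omega):
   (0, [:: a; b])   is  a = b
   (i.+1, t)        is  R_i(t)
   A literal is (true, atom) for the atom, (false, atom) for its negation. *)
Definition atom := (nat * seq nat)%type.
Definition lit := (bool * atom)%type.

Definition wf_lit (L : language) (l : lit) : bool :=
  let: (_, (s, t)) := l in
  match s with
  | 0 => size t == 2
  | i.+1 => (i < size L) && (size t == nth 0 L i)
  end.

Definition diagram (L : language) (A : structure L) (l : lit) : bool :=
  let: (b, (s, t)) := l in
  match s with
  | 0 => if t is [:: a; c] then [&& sdom A a, sdom A c & b == (a == c)]
         else false
  | i.+1 => [&& i < size L, size t == nth 0 L i, all (sdom A) t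
             & b == srel A i t]
  end.

Definition finite_str (L : language) (A : structure L) : Prop :=
  exists s : seq nat, forall n, sdom A n = (n \in s).

Definition iso (L : language) (A B : structure L) : Prop :=
  exists f : nat -> nat,
  [/\ forall x, sdom A x -> sdom B (f x),
      forall x y, sdom A x -> sdom A y -> f x = f y -> x = y,
      (forall y, sdom B y -> exists2 x, sdom A x & f x = y) &
      forall i t, i < size L -> size t = nth 0 L i -> all (sdom A) t ->
        srel B i (map f t) = srel A i t].

Definition yields (L L' : language) (Phi : seq lit * lit -> Prop)
  (A : structure L) (B : structure L') : Prop :=
  forall ph : lit,
    (exists al : seq lit, Phi (al, ph) /\ all (diagram A) al) <-> diagram B ph.

Definition comp_transformation (L L' : language)
  (K : structure L -> Prop) (K' : structure L' -> Prop)
  (Phi : seq lit * lit -> Prop) : Prop :=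
  [/\ ce Phi,
      (forall al ph, Phi (al, ph) ->
         (exists C : structure L, finite_str C /\ all (diagram C) al)
         /\ wf_lit L' ph)
    & forall A, K A -> exists B, K' B /\ yields Phi A B].

Definition comp_embedding (L L' : language)
  (K : structure L -> Prop) (K' : structure L' -> Prop)
  (Phi : seq lit * lit -> Prop) : Prop :=
  comp_transformation K K' Phi /\
  forall (A A' : structure L) (B B' : structure L'),
    K A -> K A' -> yields Phi A B -> yields Phi A' B' ->
    (iso A A' <-> iso B B').

Definition le_c (L L' : language)
  (K : structure L -> Prop) (K' : structure L' -> Prop) : Prop :=
  exists Phi, comp_embedding K K' Phi.

Definition lt_c (L L' : language)
  (K : structure L -> Prop) (K' : structure L' -> Prop) : Prop :=
  le_c K K' /\ ~ le_c K' K.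

(* Language of fields: R_0 = graph of +, R_1 = graph of *,
   R_2 = {0}, R_3 = {1}. *)
Definition pf_lang : language := [:: 3; 3; 1; 1].

Definition PF (A : structure pf_lang) : Prop :=
  exists (F : finFieldType) (h : F -> nat),
  [/\ prime #|F|, injective h &
      (forall n, sdom A n <-> exists x, h x = n)] /\
  [/\       (forall x y z : F, srel A 0 [:: h x; h y; h z] = (x + y == z)%R),
      (forall x y z : F, srel A 1 [:: h x; h y; h z] = (x * y == z)%R),
      (forall x : F, srel A 2 [:: h x] = (x == 0)%R)
    & (forall x : F, srel A 3 [:: h x] = (x == 1)%R)].

(* Language of orders: R_0 = < *)
Definition flo_lang : language := [:: 2].

Definition FLO (A : structure flo_lang) : Prop :=
  [/\ finite_str A, (exists n, sdom A n),
      (forall x, sdom A x -> ~~ srel A 0 [:: x; x]),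
      (forall x y z, sdom A x -> sdom A y -> sdom A z ->
         srel A 0 [:: x; y] -> srel A 0 [:: y; z] -> srel A 0 [:: x; z])
    & (forall x y, sdom A x -> sdom A y -> x != y ->
         srel A 0 [:: x; y] || srel A 0 [:: y; x])].

From mathcomp Require Import all_boot all_order all_algebra all_field.
Set Implicit Arguments. Unset Strict Implicit.
Import GRing.Theory.

(* The transformation keeps the universe of a field and equips it
   with the usual order of natural numbers: from the premises "a = a, b = b" it
   outputs the literals deciding "a = b" and "a < b".  This set of rules is
   c.e.: its codes are the zeros of an arithmetic expression, and we compile
   expressions and unbounded search into the given model of partial recursive
   functions.  Since prime fields of equal order are isomorphic and finite
   linear orders of equal size are isomorphic, A ~ A' iff |A| = |A'| iff
   Phi(A) ~ Phi(A').

   Transformations are monotone in diagrams.  The chains of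
   length 1 and 2 are non-isomorphic but D(1) is contained in D(2), so an
   embedding would yield prime fields B1, B2 with D(B1) contained in D(B2).
   A prime field is generated by 1, so B1 contains every element of B2 and
   the identity is an isomorphism: a contradiction. *)

(* Cantor pairing: [cpair a b] is the position of (a, b) on the [a + b]-th
   anti-diagonal, which starts at the triangular number [tri (a + b)]. *)
Definition tri s := (s * s.+1)./2.

Lemma triS s : tri s.+1 = tri s + s.+1.
Proof.
rewrite /tri; have -> : s.+1 * s.+2 = s * s.+1 + (s.+1).*2.
  by rewrite -mul2n -mulnDl addn2 mulnC.
by rewrite halfD doubleK odd_double andbF add0n.
Qed.

Lemma tri_mono : {homo tri : s s' / s <= s'}.
Proof.
move=> s s' /subnK <-; elim: (s' - s) => [|k IH] //.
by rewrite addSn triS (leq_trans IH) // leq_addr.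
Qed.

Lemma cpair_diag a b : tri (a + b) <= cpair a b < tri (a + b).+1.
Proof. by rewrite /cpair leq_addr triS ltn_add2l ltnS leq_addl. Qed.

(* Distinct anti-diagonals occupy disjoint intervals, so [cpair] is injective. *)
Lemma cpair_inj a b c d : cpair a b = cpair c d -> a = c /\ b = d.
Proof.
move=> E; have Es : a + b = c + d.
  suff diag_le x y z w : cpair x y = cpair z w -> x + y <= z + w.
    by apply/eqP; rewrite eqn_leq !diag_le.
  move=> Exz; rewrite leqNgt; apply/negP => lt_zw_xy.
  have /andP [_ lt_xy] := cpair_diag z w; have /andP [le_zw _] := cpair_diag x y.
  by have := leq_trans (tri_mono lt_zw_xy) le_zw; rewrite Exz leqNgt lt_xy.
move: E; rewrite /cpair Es => /addnI Ebd; subst d.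
by move/addIn: Es.
Qed.

Lemma cpair_succ a b :
  (cpair a b).+1 = if a is a'.+1 then cpair a' b.+1 else cpair b.+1 0.
Proof.
case: a => [|a]; rewrite /cpair -!/(tri _); first by rewrite add0n !addn0 triS addnS.
by rewrite addSnnS -addnS.
Qed.

Fixpoint unpair n : nat * nat :=
  if n is n'.+1 then
    let: (a, b) := unpair n' in if a is a'.+1 then (a', b.+1) else (b.+1, 0)
  else (0, 0).

Lemma unpairK n : cpair (unpair n).1 (unpair n).2 = n.
Proof.
elim: n => [|n IH] //=; case: (unpair n) IH => a b /= <-.
by case: a => [|a]; rewrite cpair_succ.
Qed.

Lemma cpairK a b : unpair (cpair a b) = (a, b).
Proof.
have := unpairK (cpair a b).
by case: (unpair _) => x y /= /cpair_inj [-> ->].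
Qed.

(* Inversion on [ev] produces equations between pairs and successors; these two
   tactics solve them and chain the induction hypotheses of [ev_det]. *)
Ltac cpair_inversion := repeat match goal with
  | H : cpair _ _ = cpair _ _ |- _ => case/cpair_inj: H => ??; subst
  | H : _.+1 = _.+1 |- _ => case: H => ?; subst end.

Ltac apply_det_hyp := repeat match goal with
  | IH : forall r, ev ?c ?n r -> _ = r, H : ev ?c ?n _ |- _ =>
      move/IH: H => ?; subst end.

Lemma ev_det c n r1 r2 : ev c n r1 -> ev c n r2 -> r1 = r2.
Proof.
move=> H; elim: H r2 => *;
  match goal with H : ev _ _ _ |- _ => inversion H; clear H end;
  subst; cpair_inversion; apply_det_hyp; congruence.
Qed.

(* A recursion step of [CPrec f g] receives
   [cpair a (cpair k ih)]; [prev_code] extracts the previous value [ih]. *)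
Definition id_code := CPair CLeft CRight.
Fixpoint const_code k := if k is k'.+1 then CComp CSucc (const_code k') else CZero.
Definition app2_code c f g := CComp c (CPair f g).
Definition prev_code := CComp CRight CRight.
Definition add_code := CPrec id_code (CComp CSucc prev_code).
Definition mul_code := CPrec CZero (app2_code add_code prev_code CLeft).
Definition pred_code := CPrec CZero (CComp CLeft CRight).
Definition sub_code := CPrec id_code (CComp pred_code (CPair CZero prev_code)).
Definition pow2_code := CPrec (const_code 1) (app2_code add_code prev_code prev_code).

Lemma ev_left n : ev CLeft n (unpair n).1.
Proof. by rewrite -{1}(unpairK n); constructor. Qed.

Lemma ev_right n : ev CRight n (unpair n).2.
Proof. by rewrite -{1}(unpairK n); constructor. Qed.

Lemma ev_id n : ev id_code n n.
Proof. by rewrite -{2}(unpairK n); constructor; [apply: ev_left | apply: ev_right]. Qed.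

Lemma ev_const k n : ev (const_code k) n k.
Proof. by elim: k => [|k IH] /=; [constructor | apply: evComp IH _; constructor]. Qed.

Lemma ev_app2 c f g n x y r :
  ev f n x -> ev g n y -> ev c (cpair x y) r -> ev (app2_code c f g) n r.
Proof. by move=> Hf Hg Hc; apply: evComp Hc; constructor. Qed.

Lemma ev_prev a k ih : ev prev_code (cpair a (cpair k ih)) ih.
Proof. by apply: evComp; constructor. Qed.

Lemma ev_add a k : ev add_code (cpair a k) (a + k).
Proof.
elim: k => [|k IH]; first by rewrite addn0; constructor; apply: ev_id.
by apply: evPrecS IH _; rewrite addnS; apply: evComp (ev_prev _ _ _) _; constructor.
Qed.

Lemma ev_mul a k : ev mul_code (cpair a k) (a * k).
Proof.
elim: k => [|k IH]; first by rewrite muln0; do 2!constructor.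
apply: evPrecS IH _; rewrite mulnS addnC.
by apply: ev_app2 (ev_prev _ _ _) _ (ev_add _ _); constructor.
Qed.

Lemma ev_pred a k : ev pred_code (cpair a k) k.-1.
Proof.
elim: k => [|k IH]; first by do 2!constructor.
by apply: evPrecS IH _; apply: evComp; constructor.
Qed.

Lemma ev_sub a k : ev sub_code (cpair a k) (a - k).
Proof.
elim: k => [|k IH]; first by rewrite subn0; constructor; apply: ev_id.
apply: evPrecS IH _; rewrite subnS.
by apply: evComp (ev_pred 0 _); constructor; [constructor | apply: ev_prev].
Qed.

Lemma ev_pow2 a k : ev pow2_code (cpair a k) (2 ^ k).
Proof.
elim: k => [|k IH]; first by constructor; apply: ev_const.
apply: evPrecS IH _; rewrite expnS mul2n -addnn.
exact: ev_app2 (ev_prev _ _ _) (ev_prev _ _ _) (ev_add _ _).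
Qed.

Inductive expr :=
  | EVar | ENum of nat | EAdd of expr & expr | EMul of expr & expr
  | ESub of expr & expr | EPow2 of expr | EFst of expr | ESnd of expr.

Fixpoint eval (e : expr) (n : nat) : nat :=
  match e with
  | EVar => n
  | ENum k => k
  | EAdd e1 e2 => eval e1 n + eval e2 n
  | EMul e1 e2 => eval e1 n * eval e2 n
  | ESub e1 e2 => eval e1 n - eval e2 n
  | EPow2 e1 => 2 ^ eval e1 n
  | EFst e1 => (unpair (eval e1 n)).1
  | ESnd e1 => (unpair (eval e1 n)).2
  end.

Fixpoint compile (e : expr) : code :=
  match e with
  | EVar => id_code
  | ENum k => const_code k
  | EAdd e1 e2 => app2_code add_code (compile e1) (compile e2)
  | EMul e1 e2 => app2_code mul_code (compile e1) (compile e2)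
  | ESub e1 e2 => app2_code sub_code (compile e1) (compile e2)
  | EPow2 e1 => app2_code pow2_code CZero (compile e1)
  | EFst e1 => CComp CLeft (compile e1)
  | ESnd e1 => CComp CRight (compile e1)
  end.

Lemma compile_correct e n : ev (compile e) n (eval e n).
Proof.
elim: e n => [|k|e1 IH1 e2 IH2|e1 IH1 e2 IH2|e1 IH1 e2 IH2|e1 IH1|e1 IH1|e1 IH1] n /=.
- exact: ev_id.
- exact: ev_const.
- exact: ev_app2 (IH1 n) (IH2 n) (ev_add _ _).
- exact: ev_app2 (IH1 n) (IH2 n) (ev_mul _ _).
- exact: ev_app2 (IH1 n) (IH2 n) (ev_sub _ _).
- by apply: ev_app2 _ (IH1 n) (ev_pow2 _ _); constructor.
- exact: evComp (IH1 n) (ev_left _).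
- exact: evComp (IH1 n) (ev_right _).
Qed.

Section Search.
Variables (f : code) (F : nat -> nat).
Hypothesis f_computes : forall n, ev f n (F n).

Lemma find_sound a m r : ev (CFind f) (cpair a m) r -> exists m', F (cpair a m') = 0.
Proof.
move Ec: (CFind f) => c; move Ek: (cpair a m) => k H.
elim: H a m Ec Ek; try by [intros; discriminate].
  move=> f' a' m' Hf _ a m [Ef] /cpair_inj [-> _]; subst f'.
  by exists m'; apply: ev_det (f_computes _) Hf.
move=> f' a' m' v r' _ _ _ IH a m Ef /cpair_inj [-> _].
exact: IH a' m'.+1 Ef erefl.
Qed.

Lemma find_complete a m0 m : F (cpair a m0) = 0 -> m <= m0 ->
  exists r, ev (CFind f) (cpair a m) r.
Proof.
move=> F0; move Ed: (m0 - m) => d; elim: d m Ed => [|d IH] m Ed le_m.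
  have -> : m = m0 by apply/eqP; rewrite eqn_leq le_m -subn_eq0 Ed.
  by exists m0; apply: evFind0; rewrite -F0.
case Fm: (F (cpair a m)) => [|v]; first by exists m; apply: evFind0; rewrite -Fm.
have lt_m : m < m0 by rewrite -subn_gt0 Ed.
have [r Hr] := IH m.+1 (etrans (subnS _ _) (congr1 predn Ed)) lt_m.
by exists r; apply: (@evFindS f a m v) Hr; rewrite -Fm.
Qed.

Definition search_code := CComp (CFind f) (CPair id_code CZero).

Lemma search_codeP n : (exists r, ev search_code n r) <-> (exists m, F (cpair n m) = 0).
Proof.
have start : ev (CPair id_code CZero) n (cpair n 0).
  by constructor; [apply: ev_id | constructor].
split=> [[r H] | [m Fm]].
  inversion H as [| | | | | f' g' n' m' r' Hg Hf | | | |]; subst.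
  by rewrite (ev_det Hg start) in Hf; apply: find_sound Hf.
have [r Hr] := find_complete Fm (leq0n m).
by exists r; apply: evComp Hr.
Qed.
End Search.

Lemma ce_of_expr (T : countType) (P : T -> Prop) (e : expr) :
  (forall x, P x <-> exists m, eval e (cpair (pickle x) m) = 0) -> ce P.
Proof.
move=> HP; exists (search_code (compile e)) => x.
exact: iff_trans (HP x) (iff_sym (search_codeP (compile_correct e) _)).
Qed.

(* The transformation PF -> FLO: from the premises [a = a] and [b = b] (that
   is, a and b are in the universe) it outputs the literal deciding [a = b]
   and the literal deciding [a < b] for the usual order of natural numbers. *)
Definition self_lit a : lit := (true, (0, [:: a; a])).
Definition eq_lit a b : lit := (a == b, (0, [:: a; b])).
Definition lt_lit a b : lit := (a < b, (1, [:: a; b])).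
Definition eq_rule a b : seq lit * lit := ([:: self_lit a; self_lit b], eq_lit a b).
Definition lt_rule a b : seq lit * lit := ([:: self_lit a; self_lit b], lt_lit a b).

Definition order_transform (x : seq lit * lit) : Prop :=
  exists a b, x = eq_rule a b \/ x = lt_rule a b.

(* Arithmetic description of the codes [pickle] assigns to the rules: pairs
   and two-element lists are both coded by [CodeSeq.code [:: x; y]]. *)
Definition e_code2 e1 e2 := EMul (EPow2 e1) (EAdd (EAdd (EPow2 e2) (EPow2 e2)) (ENum 1)).
Definition e_dist e1 e2 := EAdd (ESub e1 e2) (ESub e2 e1).
Definition e_eqb e1 e2 := ESub (ENum 1) (e_dist e1 e2).
Definition e_ltb e1 e2 := ESub (ENum 1) (ESub (ENum 1) (ESub e2 e1)).

Lemma eval_code2 e1 e2 n : eval (e_code2 e1 e2) n = CodeSeq.code [:: eval e1 n; eval e2 n].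
Proof. by rewrite /CodeSeq.code /= muln1 addnn addn1. Qed.

Lemma eval_dist e1 e2 n : (eval (e_dist e1 e2) n == 0) = (eval e1 n == eval e2 n).
Proof. by rewrite /= addn_eq0 !subn_eq0 eqn_leq. Qed.

Lemma eval_eqb e1 e2 n : eval (e_eqb e1 e2) n = (eval e1 n == eval e2 n).
Proof. by rewrite -eval_dist /=; case: (_ - _ + _). Qed.

Lemma eval_ltb e1 e2 n : eval (e_ltb e1 e2) n = (eval e1 n < eval e2 n).
Proof. by rewrite /= -subn_gt0; case: (eval e2 n - eval e1 n). Qed.

(* On input [cpair n (cpair a b)], [e_transform] vanishes iff [n] is the code of
   one of the two rules generated by a and b. *)
Definition e_input := EFst EVar.
Definition e_a := EFst (ESnd EVar).
Definition e_b := ESnd (ESnd EVar).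
Definition e_self e := e_code2 (ENum 1) (e_code2 (ENum 0) (e_code2 e e)).
Definition e_rule e_bit k :=
  e_code2 (e_code2 (e_self e_a) (e_self e_b))
          (e_code2 e_bit (e_code2 (ENum k) (e_code2 e_a e_b))).
Definition e_eq_rule := e_rule (e_eqb e_a e_b) 0.
Definition e_lt_rule := e_rule (e_ltb e_a e_b) 1.
Definition e_transform := EMul (e_dist e_input e_eq_rule) (e_dist e_input e_lt_rule).

Lemma eval_args n a b : let x := cpair n (cpair a b) in
  [/\ eval e_input x = n, eval e_a x = a & eval e_b x = b].
Proof. by rewrite /= !cpairK. Qed.

Lemma eval_rule e_bit k n a b (c : bool) : eval e_bit (cpair n (cpair a b)) = c ->
  eval (e_rule e_bit k) (cpair n (cpair a b)) =
  pickle (([:: self_lit a; self_lit b], (c, (k, [:: a; b]))) : seq lit * lit).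
Proof.
move=> Hc; case: (eval_args n a b) => _ Ha Hb.
by rewrite /e_rule /e_self !eval_code2 Hc Ha Hb.
Qed.

Lemma eval_transform n a b :
  (eval e_transform (cpair n (cpair a b)) == 0) =
  (n == pickle (eq_rule a b)) || (n == pickle (lt_rule a b)).
Proof.
rewrite [eval _ _]/(eval (e_dist e_input e_eq_rule) _ * eval (e_dist e_input e_lt_rule) _).
rewrite muln_eq0 !eval_dist (eval_rule _ (eval_eqb _ _ _)) (eval_rule _ (eval_ltb _ _ _)).
by case: (eval_args n a b) => -> -> ->.
Qed.

Lemma order_transform_ce : ce order_transform.
Proof.
apply: (@ce_of_expr _ _ e_transform) => x; split=> [[a [b Hx]] | [m]].
  exists (cpair a b); apply/eqP; rewrite eval_transform.
  by case: Hx => ->; rewrite eqxx ?orbT.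
rewrite -(unpairK m) => /eqP; rewrite eval_transform.
by case/orP => /eqP/(pcan_inj pickleK) ->; do 2!eexists; [left | right].
Qed.

Section Structures.
Variable L : language.
Implicit Types A B C : structure L.

Lemma diagram_self B n : diagram B (true, (0, [:: n; n])) = sdom B n.
Proof. by rewrite /= eqxx andbT andbb. Qed.

Lemma diagram_srel B i t : i < size L -> size t = nth 0 L i -> all (sdom B) t ->
  diagram B (srel B i t, (i.+1, t)).
Proof. by move=> Hi Ht Hd; rewrite /= Hi Ht Hd !eqxx. Qed.

Lemma diagram_inclusion_rel B C i t : (forall l, diagram B l -> diagram C l) ->
  i < size L -> size t = nth 0 L i -> all (sdom B) t -> srel C i t = srel B i t.
Proof. by move=> BC Hi Ht Hd; have /BC /and4P [_ _ _ /eqP] := diagram_srel Hi Ht Hd. Qed.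

Lemma iso_of_diagram B C : diagram B =1 diagram C -> iso B C.
Proof.
move=> BC; have dom x : sdom B x = sdom C x by rewrite -!diagram_self BC.
have BsubC : (forall l, diagram B l -> diagram C l) by move=> l; rewrite BC.
exists id; split=> // [x | x | i t Hi Ht Hd]; first by rewrite dom.
  by exists x; rewrite ?dom.
by rewrite map_id (diagram_inclusion_rel BsubC Hi Ht Hd).
Qed.

Lemma iso_trans A B C : iso A B -> iso B C -> iso A C.
Proof.
move=> [f [fd fi fs fr]] [g [gd gi gs gr]]; exists (g \o f); split=> /=.
- by move=> x /fd /gd.
- by move=> x y Hx Hy /gi /fi; apply; rewrite ?fd.
- by move=> z /gs [y /fs [x Hx <-] <-]; exists x.
- move=> i t Hi Ht Hd; rewrite map_comp gr ?fr // ?size_map //.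
  by rewrite all_map; apply: sub_all Hd.
Qed.

Lemma iso_card A B (s s' : seq nat) : uniq s -> uniq s' ->
  (forall n, sdom A n = (n \in s)) -> (forall n, sdom B n = (n \in s')) ->
  iso A B -> size s = size s'.
Proof.
move=> us us' ds ds' [f [fd fi fs _]]; apply/eqP; rewrite eqn_leq; apply/andP; split.
  rewrite -(size_map f); apply: uniq_leq_size.
    by rewrite map_inj_in_uniq // => x y xs ys; apply: fi; rewrite ds.
  by move=> _ /mapP [x xs ->]; rewrite -ds' fd // ds.
rewrite -(size_map f s); apply: uniq_leq_size => // y ys.
by have [x xA <-] := fs y (etrans (ds' y) ys); rewrite map_f // -ds.
Qed.

End Structures.

Section Transformations.
Variables (L L' : language) (Phi : seq lit * lit -> Prop).

Lemma yields_mono (A A' : structure L) (B B' : structure L') :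
  (forall l, diagram A l -> diagram A' l) -> yields Phi A B -> yields Phi A' B' ->
  (forall l, diagram B l -> diagram B' l).
Proof.
move=> AA' YB YB' l /YB [al [Hal /allP Hd]]; apply/YB'; exists al; split=> //.
by apply/allP => l' /Hd /AA'.
Qed.

Lemma yields_unique (A : structure L) (B B' : structure L') :
  yields Phi A B -> yields Phi A B' -> diagram B =1 diagram B'.
Proof.
by move=> YB YB' l; apply/idP/idP; exact: (@yields_mono A A).
Qed.

End Transformations.

(* A set of natural numbers ordered by the usual order.  Finite such orders are
   determined up to isomorphism by their size: the isomorphism matches the
   i-th smallest elements of both universes. *)
Definition nat_order (D : pred nat) : structure flo_lang :=
  @Structure flo_lang D (fun _ t => if t is [:: x; y] then x < y else false).

Lemma FLO_nat_order (D : pred nat) (s : seq nat) :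
  (forall n, D n = (n \in s)) -> (exists n, D n) -> FLO (nat_order D).
Proof.
move=> Ds D_ne; split=> //; first by exists s.
- by move=> x _; rewrite /= ltnn.
- by move=> x y z _ _ _ /=; apply: ltn_trans.
- by move=> x y _ _ /=; case: ltngtP.
Qed.

Lemma nat_order_iso (D D' : pred nat) (s s' : seq nat) : uniq s -> uniq s' ->
  (forall n, D n = (n \in s)) -> (forall n, D' n = (n \in s')) -> size s = size s' ->
  iso (nat_order D) (nat_order D').
Proof.
move=> us us' Ds Ds' Es; set ss := sort leq s; set ss' := sort leq s'.
have nth_mono (r : seq nat) : uniq r ->
    {in [pred i | i < size r] &, {mono nth 0 (sort leq r) : i j / i < j}}.
  move=> ur i j ir jr; rewrite -(size_sort leq) in ir jr.
  have sr : sorted ltn (sort leq r).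
    by rewrite ltn_sorted_uniq_leq sort_uniq ur sort_sorted //; apply: leq_total.
  exact: (leqW_mono_in (leq_mono_in (sorted_ltn_nth ltn_trans 0 sr))).
have idx x : D x -> index x ss < size s by rewrite Ds -(size_sort leq) index_mem mem_sort.
have idx' y : D' y -> index y ss' < size s'.
  by rewrite Ds' -(size_sort leq) index_mem mem_sort.
pose f x := nth 0 ss' (index x ss).
exists f; split.
- move=> x /idx; rewrite Es -(size_sort leq) /= Ds' -(mem_sort leq) => /(mem_nth 0).
  by rewrite /f.
- move=> x y Dx Dy /eqP; rewrite /f nth_uniq ?sort_uniq ?size_sort -?Es ?idx // => /eqP.
  by move/(congr1 (nth 0 ss)); rewrite !nth_index // mem_sort -Ds.
- move=> y Dy; exists (nth 0 ss (index y ss')).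
    by rewrite /= Ds -(mem_sort leq) mem_nth // size_sort Es idx'.
  by rewrite /f index_uniq ?sort_uniq ?size_sort ?Es ?idx' // nth_index // mem_sort -Ds'.
- move=> [|i] t // _; case: t => [|x [|y []]] // _ /and3P [Dx Dy _] /=.
  rewrite /f nth_mono ?inE -?Es ?idx //.
  by rewrite -(nth_mono s) ?inE ?idx // !nth_index // mem_sort -Ds.
Qed.

Definition presents (A : structure pf_lang) (F : finFieldType) (h : F -> nat) : Prop :=
  [/\ prime #|F|, injective h & (forall n, sdom A n <-> exists x, h x = n)] /\
  [/\ (forall x y z : F, srel A 0 [:: h x; h y; h z] = (x + y == z)%R),
      (forall x y z : F, srel A 1 [:: h x; h y; h z] = (x * y == z)%R),
      (forall x : F, srel A 2 [:: h x] = (x == 0)%R)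
    & (forall x : F, srel A 3 [:: h x] = (x == 1)%R)].

Section PrimeField.
Local Open Scope ring_scope.
Variable F : finFieldType.
Hypothesis F_prime : prime #|F|.

Lemma natr_eq_mod (i j : nat) : ((i%:R : F) == j%:R) = (i == j %[mod #|F|])%N.
Proof.
wlog le_ij : i j / (i <= j)%N.
  by move=> H; case/orP: (leq_total i j) => /H // E; rewrite eq_sym E eq_sym.
have F_char : #|F| \in [pchar F] by apply: (@card_finPcharP F #|F| 1); rewrite ?expn1.
by rewrite eq_sym -subr_eq0 -natrB // -(dvdn_pcharf F_char) eq_sym eqn_mod_dvd.
Qed.

Lemma numeral_surj (y : F) : exists k : nat, y = k%:R.
Proof.
pose g (k : 'I_#|F|) : F := (k : nat)%:R.
have g_inj : injective g.
  by move=> k k' /eqP; rewrite natr_eq_mod !modn_small // => /eqP/val_inj.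
have := inj_card_onto g_inj; rewrite card_ord leqnn => /(_ isT y) /codomP [k ->].
by exists k.
Qed.
End PrimeField.

(* Two prime fields of the same order are isomorphic via k%:R |-> k%:R. *)
Section NumeralMap.
Local Open Scope ring_scope.
Variables F F' : finFieldType.
Hypothesis F_prime : prime #|F|.
Hypothesis card_eq : #|F| = #|F'|.

Let F'_prime : prime #|F'|. Proof. by rewrite -card_eq. Qed.

Definition numeral_map (x : F) : F' :=
  if [pick k : 'I_#|F| | (k : nat)%:R == x] is Some k then (k : nat)%:R else 0.

Lemma numeral_mapE (k : nat) : numeral_map k%:R = k%:R.
Proof.
rewrite /numeral_map; case: pickP => [k0 | none].
  by rewrite natr_eq_mod // => E; apply/eqP; rewrite natr_eq_mod // -card_eq.
have := none (Ordinal (ltn_pmod k (prime_gt0 F_prime))).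
by rewrite /= natr_eq_mod // modn_mod eqxx.
Qed.

Lemma numeral_map0 : numeral_map 0 = 0.
Proof. exact: numeral_mapE 0. Qed.

Lemma numeral_map1 : numeral_map 1 = 1.
Proof. exact: numeral_mapE 1. Qed.

Lemma numeral_map_inj : injective numeral_map.
Proof.
move=> x y; have [i ->] := numeral_surj F_prime x; have [j ->] := numeral_surj F_prime y.
rewrite !numeral_mapE => /eqP; rewrite natr_eq_mod // -card_eq => E.
by apply/eqP; rewrite natr_eq_mod.
Qed.

Lemma numeral_map_surj y : exists x, numeral_map x = y.
Proof. by have [k ->] := numeral_surj F'_prime y; exists k%:R; rewrite numeral_mapE. Qed.

Lemma numeral_mapD x y : numeral_map (x + y) = numeral_map x + numeral_map y.
Proof.
have [i ->] := numeral_surj F_prime x; have [j ->] := numeral_surj F_prime y.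
by rewrite -natrD !numeral_mapE natrD.
Qed.

Lemma numeral_mapM x y : numeral_map (x * y) = numeral_map x * numeral_map y.
Proof.
have [i ->] := numeral_surj F_prime x; have [j ->] := numeral_surj F_prime y.
by rewrite -natrM !numeral_mapE natrM.
Qed.
End NumeralMap.

Section Presentations.
Variables (A : structure pf_lang) (F : finFieldType) (h : F -> nat).
Hypothesis hA : presents A h.

Lemma presents_dom n : sdom A n = (n \in codom h).
Proof.
case: hA => [[_ _ domA] _]; apply/idP/codomP => [/domA [x <-] | [x ->]].
  by exists x.
by apply/domA; exists x.
Qed.

Lemma presents_uniq : uniq (codom h).
Proof. by case: hA => [[_ h_inj _] _]; rewrite map_inj_uniq ?enum_uniq. Qed.

Lemma presents_in x : sdom A (h x).
Proof. by rewrite presents_dom codom_f. Qed.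

Lemma presents_tuple t : all (sdom A) t -> exists xs, t = map h xs.
Proof.
elim: t => [|n t IH] /=; first by exists [::].
by rewrite presents_dom => /andP [/codomP [x ->] /IH [xs ->]]; exists (x :: xs).
Qed.
End Presentations.

Lemma presents_iso (A A' : structure pf_lang) (F F' : finFieldType) (h : F -> nat)
  (h' : F' -> nat) : presents A h -> presents A' h' ->
  #|F| = #|F'| -> iso A A'.
Proof.
move=> hA hA' card_eq; case: (hA) => [[F_prime h_inj _] [R0 R1 R2 R3]].
case: (hA') => [[_ h'_inj _] [R0' R1' R2' R3']].
have phi_inj : injective (@numeral_map F F') := numeral_map_inj F_prime card_eq.
pose phi := @numeral_map F F'.
pose f n := if [pick x | h x == n] is Some x then h' (phi x) else 0.
have fh x : f (h x) = h' (phi x).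
  by rewrite /f; case: pickP => [y /eqP /h_inj -> // | /(_ x)]; rewrite eqxx.
exists f; split.
- move=> n; rewrite (presents_dom hA) => /codomP [x ->].
  by rewrite fh presents_in.
- move=> n m; rewrite !(presents_dom hA) => /codomP [x ->] /codomP [y ->].
  by rewrite !fh => /h'_inj /phi_inj ->.
- move=> n; rewrite (presents_dom hA') => /codomP [y ->].
  have [x <-] := numeral_map_surj F_prime card_eq y.
  by exists (h x); rewrite ?fh // presents_in.
- move=> i t Hi Hs /(presents_tuple hA) [xs Et]; subst t.
  have -> : map f (map h xs) = map h' (map phi xs).
    by rewrite -!map_comp; apply: eq_map => x /=; rewrite fh.
  move: Hs; rewrite size_map; case: i Hi => [|[|[|[|i]]]] // _;
    case: xs => [|x [|y [|z []]]] //= _.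
  + by rewrite R0 R0' -(numeral_mapD F_prime card_eq) (inj_eq phi_inj).
  + by rewrite R1 R1' -(numeral_mapM F_prime card_eq) (inj_eq phi_inj).
  + by rewrite R2 R2' -(numeral_map0 F_prime card_eq) (inj_eq phi_inj).
  + by rewrite R3 R3' -(numeral_map1 F_prime card_eq) (inj_eq phi_inj).
Qed.

Lemma presents_card_iso (A A' : structure pf_lang) (F F' : finFieldType) (h : F -> nat)
    (h' : F' -> nat) (L : language) (C C' : structure L) :
  presents A h -> presents A' h' -> iso C C' ->
  (forall n, sdom C n = sdom A n) -> (forall n, sdom C' n = sdom A' n) -> #|F| = #|F'|.
Proof.
move=> hA hA' isoC dC dC'; rewrite -(size_codom h) -(size_codom h').
apply: (iso_card (presents_uniq hA) (presents_uniq hA') _ _ isoC) => n.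
  by rewrite dC (presents_dom hA).
by rewrite dC' (presents_dom hA').
Qed.

(* Rigidity: a presented prime field whose diagram is contained in that of
   another one contains 0, 1 and is closed under + 1 in it, hence contains
   every numeral, hence all of it; the identity is then an isomorphism. *)
Section Rigidity.
Variables (B1 B2 : structure pf_lang) (F1 F2 : finFieldType).
Variables (h1 : F1 -> nat) (h2 : F2 -> nat).
Hypotheses (hB1 : presents B1 h1) (hB2 : presents B2 h2).
Hypothesis B12 : forall l, diagram B1 l -> diagram B2 l.

Lemma presents_numerals (k : nat) : h1 k%:R%R = h2 k%:R%R.
Proof.
case: hB1 hB2 => [[_ _ _] [R0 _ R2 R3]] [[_ _ _] [S0 _ S2 S3]].
have in1 := presents_in hB1.
have in2 x : exists y, h1 x = h2 y.
  have := in1 x; rewrite -diagram_self => /B12.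
  rewrite diagram_self (presents_dom hB2) => /codomP [y ->].
  by exists y.
have rel12 i t := @diagram_inclusion_rel _ B1 B2 i t B12.
have [y0 E0] := in2 0%R; have [y1 E1] := in2 1%R.
have zero : h1 0%R = h2 0%R.
  by rewrite E0; congr h2; apply/eqP; rewrite -S2 -E0 rel12 //= ?in1 // R2.
have one : h1 1%R = h2 1%R.
  by rewrite E1; congr h2; apply/eqP; rewrite -S3 -E1 rel12 //= ?in1 // R3.
elim: k => [|k IH]; first exact: zero.
have [y Ey] := in2 (k%:R + 1)%R.
rewrite -natr1 Ey; congr h2; apply/eqP; rewrite eq_sym -natr1 -S0 -IH -one -Ey.
by rewrite rel12 //= ?in1 // R0.
Qed.

Lemma presents_rigid : iso B1 B2.
Proof.
case: hB2 => [[F2_prime _ _] _]; exists id; split=> //.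
- by move=> n; rewrite -!diagram_self; apply: B12.
- move=> n; rewrite (presents_dom hB2) => /codomP [y ->].
  have [k ->] := numeral_surj F2_prime y; exists (h1 k%:R%R).
    exact: presents_in hB1 _.
  exact: presents_numerals.
- by move=> i t Hi Ht Hd; rewrite map_id (diagram_inclusion_rel B12 Hi Ht Hd).
Qed.
End Rigidity.

Lemma premises_hold (L : language) (A : structure L) a b :
  all (diagram A) [:: self_lit a; self_lit b] = sdom A a && sdom A b.
Proof. by rewrite /= !eqxx !andbT !andbb. Qed.

Lemma order_transform_yields (A : structure pf_lang) :
  yields order_transform A (nat_order (sdom A)).
Proof.
move=> [c [s t]]; split.
  case=> al [[a [b [[-> -> -> ->] | [-> -> -> ->]]]]];
    rewrite premises_hold => /andP [Da Db]; by rewrite /= Da Db !eqxx.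
case: s => [|[|//]]; case: t => [|a [|b []]] //=; rewrite ?andbT -?andbA;
  move=> /and3P [Da Db /eqP ->]; exists [:: self_lit a; self_lit b];
  rewrite premises_hold Da Db; split=> //; exists a, b; by [left | right].
Qed.

Lemma order_transform_wf al ph : order_transform (al, ph) ->
  (exists C : structure pf_lang, finite_str C /\ all (diagram C) al) /\
  wf_lit flo_lang ph.
Proof.
case=> a [b [[-> ->] | [-> ->]]]; split=> //;
  exists (@Structure pf_lang (mem [:: a; b]) (fun _ _ => false));
  by split; [exists [:: a; b] | rewrite premises_hold /= !inE !eqxx ?orbT].
Qed.

Lemma order_transform_PF_FLO : comp_transformation PF FLO order_transform.
Proof.
split=> [|| A [F [h hA]]]; [exact: order_transform_ce | exact: order_transform_wf |].
exists (nat_order (sdom A)); split; last exact: order_transform_yields.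
by apply: FLO_nat_order (presents_dom hA) _; exists (h 0%R); apply: presents_in hA _.
Qed.

(* Prime fields and finite orders are both classified by their size, which Phi
   preserves since Phi(A) has the universe of A. *)
Lemma order_transform_iso (A A' : structure pf_lang) (B B' : structure flo_lang) :
  PF A -> PF A' -> yields order_transform A B -> yields order_transform A' B' ->
  iso A A' <-> iso B B'.
Proof.
move=> [F [h hA]] [F' [h' hA']] YB YB'.
have dB := yields_unique YB (order_transform_yields A).
have dB' := yields_unique YB' (order_transform_yields A').
split=> [isoA | isoB].
  apply: iso_trans (iso_of_diagram dB) _.
  apply: iso_trans (iso_of_diagram (fun l => esym (dB' l))).
  apply: nat_order_iso (presents_uniq hA) (presents_uniq hA') (presents_dom hA)
    (presents_dom hA') _.
  by rewrite !size_codom (presents_card_iso hA hA' isoA).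
have domB n : sdom B n = sdom A n by rewrite -diagram_self dB diagram_self.
have domB' n : sdom B' n = sdom A' n by rewrite -diagram_self dB' diagram_self.
exact: presents_iso hA hA' (presents_card_iso hA hA' isoB domB domB').
Qed.

Lemma le_PF_FLO : le_c PF FLO.
Proof.
exists order_transform; split; first exact: order_transform_PF_FLO.
by move=> A A' B B' PFA PFA'; apply: order_transform_iso.
Qed.

(* The orders 0 < ... < k-1: the chain of length 1 is not isomorphic to the
   chain of length 2, although its diagram is contained in the latter's. *)
Definition chain k := nat_order (fun n => n < k).

Lemma chain_dom k n : sdom (chain k) n = (n \in iota 0 k).
Proof. by rewrite mem_iota. Qed.

Lemma chain_FLO k : 0 < k -> FLO (chain k).
Proof. by move=> k_gt0; apply: FLO_nat_order (@chain_dom k) _; exists 0. Qed.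

Lemma chain_diagram_mono k k' l :
  k <= k' -> diagram (chain k) l -> diagram (chain k') l.
Proof.
move=> le_kk'; have lt_mono n : n < k -> n < k' by move/leq_trans; apply.
case: l => c [[|i] t] /=.
  by case: t => [|a [|b []]] //= /and3P [/lt_mono -> /lt_mono -> ->].
by case/and4P => -> -> /(sub_all lt_mono) -> ->.
Qed.

(* No embedding FLO -> PF: it would send the chains of length 1 and 2 to prime
   fields with included diagrams, which are isomorphic by rigidity. *)
Lemma not_le_FLO_PF : ~ le_c FLO PF.
Proof.
case=> Phi [[_ _ Phi_maps] Phi_iso].
have [B1 [[F1 [h1 hB1]] Y1]] := Phi_maps _ (chain_FLO (isT : 0 < 1)).
have [B2 [[F2 [h2 hB2]] Y2]] := Phi_maps _ (chain_FLO (isT : 0 < 2)).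
have /(iso_card (iota_uniq 0 1) (iota_uniq 0 2) (@chain_dom 1) (@chain_dom 2)) // :
  iso (chain 1) (chain 2).
apply/(Phi_iso _ _ _ _ (chain_FLO (isT : 0 < 1)) (chain_FLO (isT : 0 < 2)) Y1 Y2).
exact: presents_rigid hB1 hB2 (yields_mono (@chain_diagram_mono 1 2 ^~ isT) Y1 Y2).
Qed.

Theorem proposition2p1 : lt_c PF FLO.
Proof. exact: (conj le_PF_FLO not_le_FLO_PF). Qed.
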